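(* Let $n\ge4$, $\bar K>0$. For all $x\ge0$ (with all functions evaluated at $x$): (i) $\frac{4x(\mathring b')^2}{\mathring b}<1$; (ii) $2x\mathring b''+\mathring b'<\frac{2(n-1)}{n(n+2)}$ provided $\delta\le\frac{2(2n-5)}{n^2-4}$; (iii) $\frac{n-2}{\sqrt{n(n-1)}}\sqrt{x\mathring b}+\mathring b<\frac xn+n\bar K$; (iv) $\mathring b(b-n\bar K)-x\mathring b'(b+n\bar K)<-2(1-\delta)(n-2)\bar K^2$; (v) $\frac{x}{n-1}(b+n\bar K)-\big(\frac{x}{n-1}+2n\bar K\big)\big(\mathring b+b-n\bar K-x\mathring b'\big)<-\frac{2\bar Kx}{n-1}+2n(n-4)\bar K^2$; (vi) $2\mathring b-\frac xn+x\mathring b'<2\big(\delta(n-2)+2\big)\bar K$.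
   Context: For $x\ge0$, $\alpha(x)=n\bar K+\frac{n}{2(n-1)}x-\frac{n-2}{2(n-1)}\sqrt{x^2+4(n-1)\bar Kx}$, $b(x)=(1-\delta)\big(\frac{x}{n-1}+2\bar K\big)+\delta\alpha(x)$ and $\mathring b(x)=b(x)-\frac xn$, where $\delta=\frac{\sqrt{12n+9}-7}{2(n-2)}$ if $4\le n\le12$ and $\delta=\frac{2(2n-5)}{n^2-2}$ if $n\ge13$. Primes denote derivatives in $x$. *)

From Stdlib Require Import Reals Lra.
From Coquelicot Require Import Coquelicot.
Open Scope R_scope.

Definition alpha (n : nat) (K x : R) : R :=
  INR n * K + INR n / (2 * (INR n - 1)) * x
  - (INR n - 2) / (2 * (INR n - 1)) * sqrt (x ^ 2 + 4 * (INR n - 1) * K * x).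

Definition delta (n : nat) : R :=
  if (n <=? 12)%nat then (sqrt (12 * INR n + 9) - 7) / (2 * (INR n - 2))
  else 2 * (2 * INR n - 5) / (INR n ^ 2 - 2).

Definition bfun (n : nat) (K x : R) : R :=
  (1 - delta n) * (x / (INR n - 1) + 2 * K) + delta n * alpha n K x.

Definition bo (n : nat) (K x : R) : R := bfun n K x - x / INR n.

Definition bo' (n : nat) (K x : R) : R := Derive (bo n K) x.
Definition bo'' (n : nat) (K x : R) : R := Derive (Derive (bo n K)) x.

(* Write N = INR n, q = 2(N-1)K and s = sqrt(x^2 + 2qx) (the
   square root occurring in alpha).  The substitution
       x = q(1-r)^2/(2r),   s = q(1-r^2)/(2r),   0 < r < 1,
   rationalises s, and every quantity of the lemma becomes a rational function
   of r: b, \mathring b, \mathring b' and \mathring b'' have simple closed forms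
   in r (lemmas [b_param] ... [bo2_param]).  Each of (i)-(vi) then reduces, after
   clearing denominators, to the sign of an explicit polynomial in r, N and
   delta, which is settled using only 0 < r < 1, N >= 4 and 0 < delta < 1. *)
From Stdlib Require Import Reals Lra Lia.
From Coquelicot Require Import Coquelicot.
Open Scope R_scope.

Ltac positivity :=
  repeat (first [lra | apply Rmult_lt_0_compat | apply Rdiv_lt_0_compat
                | apply Rinv_0_lt_compat | apply pow_lt]); try nra.

Lemma INR_ge4 (n : nat) : (4 <= n)%nat -> 4 <= INR n.
Proof. intros Hn. apply le_INR in Hn. simpl in Hn. lra. Qed.

Definition alpha_of (N K x s : R) : R :=
  N * K + N / (2 * (N - 1)) * x - (N - 2) / (2 * (N - 1)) * s.

Definition b_of (N K d x s : R) : R :=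
  (1 - d) * (x / (N - 1) + 2 * K) + d * alpha_of N K x s.

Definition bo_of (N K d x s : R) : R := b_of N K d x s - x / N.

Definition bo1_of (N K d x s : R) : R :=
  (1 - d) / (N - 1)
  + d * (N / (2 * (N - 1)) - (N - 2) / (2 * (N - 1)) * ((x + 2 * (N - 1) * K) / s))
  - 1 / N.

Definition bo2_of (N K d s : R) : R :=
  d * (N - 2) / (2 * (N - 1)) * (4 * (N - 1) ^ 2 * K ^ 2) / s ^ 3.

Notation root n K x := (sqrt (x ^ 2 + 4 * (INR n - 1) * K * x)) (only parsing).

Lemma bfun_eq (n : nat) (K x : R) :
  bfun n K x = b_of (INR n) K (delta n) x (root n K x).
Proof. reflexivity. Qed.

Lemma bo_eq (n : nat) (K x : R) :
  bo n K x = bo_of (INR n) K (delta n) x (root n K x).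
Proof. reflexivity. Qed.

(* The radicand is positive for y > 0, so the square root is differentiable there. *)
Lemma radicand_pos (N K y : R) : 1 < N -> 0 < K -> 0 < y ->
  0 < y ^ 2 + 4 * (N - 1) * K * y.
Proof. intros HN HK Hy. assert (0 < (N - 1) * K * y) by positivity. nra. Qed.

Lemma is_derive_bo (n : nat) (K y : R) : (4 <= n)%nat -> 0 < K -> 0 < y ->
  is_derive (bo n K) y (bo1_of (INR n) K (delta n) y (root n K y)).
Proof.
  intros Hn HK Hy. pose proof (INR_ge4 n Hn) as HN.
  pose proof (radicand_pos (INR n) K y ltac:(lra) HK Hy) as HS.
  pose proof (sqrt_lt_R0 _ HS).
  unfold bo, bfun, alpha. auto_derive; [lra |].
  unfold bo1_of. replace (y * (y * 1)) with (y ^ 2) by ring.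
  field. repeat split; lra.
Qed.

Lemma bo'_eq (n : nat) (K y : R) : (4 <= n)%nat -> 0 < K -> 0 < y ->
  bo' n K y = bo1_of (INR n) K (delta n) y (root n K y).
Proof. intros. apply is_derive_unique. now apply is_derive_bo. Qed.

Lemma ball_self_radius_pos (y : R) (Hy : 0 < y) (z : R) : ball y (mkposreal y Hy) z -> 0 < z.
Proof.
  intros Hz. cbv [ball] in Hz; simpl in Hz.
  unfold AbsRing_ball, abs, minus, plus, opp in Hz; simpl in Hz.
  apply Rabs_def2 in Hz. lra.
Qed.

(* The second derivative: differentiate the closed form of \mathring b',
   which agrees with Derive (bo n K) on a neighbourhood of y > 0. *)
Lemma bo''_eq (n : nat) (K y : R) : (4 <= n)%nat -> 0 < K -> 0 < y ->
  bo'' n K y = bo2_of (INR n) K (delta n) (root n K y).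
Proof.
  intros Hn HK Hy. pose proof (INR_ge4 n Hn) as HN. unfold bo''.
  rewrite (Derive_ext_loc _ (fun z => bo1_of (INR n) K (delta n) z (root n K z))).
  2:{ exists (mkposreal y Hy). intros z Hz. apply bo'_eq; auto.
      exact (ball_self_radius_pos y Hy z Hz). }
  apply is_derive_unique.
  pose proof (radicand_pos (INR n) K y ltac:(lra) HK Hy) as HS.
  pose proof (sqrt_lt_R0 _ HS). pose proof (sqrt_sqrt _ (Rlt_le _ _ HS)) as Hsq.
  unfold bo1_of. auto_derive; replace (y * (y * 1)) with (y ^ 2) by ring;
    [repeat split; lra |].
  unfold bo2_of.
  set (s := sqrt (y ^ 2 + 4 * (INR n - 1) * K * y)) in *.
  replace (4 * (INR n - 1) ^ 2 * K ^ 2) with ((y + 2 * (INR n - 1) * K) ^ 2 - s * s)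
    by (rewrite Hsq; ring).
  field. repeat split; lra.
Qed.

(* Rational parametrisation of the curve s^2 = x^2 + 2qx, s > 0, x > 0:
   r = (x + q - s)/q lies in (0,1) and recovers x and s. *)
Lemma rational_parametrization (q x : R) : 0 < q -> 0 < x ->
  exists r, 0 < r < 1 /\ x = q * (1 - r) ^ 2 / (2 * r)
            /\ sqrt (x ^ 2 + 2 * q * x) = q * (1 - r ^ 2) / (2 * r).
Proof.
  intros Hq Hx.
  assert (HS : 0 <= x ^ 2 + 2 * q * x) by nra.
  pose proof (sqrt_sqrt _ HS) as Hss. pose proof (sqrt_pos (x ^ 2 + 2 * q * x)).
  set (s := sqrt (x ^ 2 + 2 * q * x)) in *.
  assert (Hs_lo : x < s) by nra.
  assert (Hs_hi : s < x + q) by nra.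
  set (w := x + q - s).
  assert (Hw : 0 < w < q) by (unfold w; lra).
  assert (Hxw : (q - w) ^ 2 = 2 * w * x) by (unfold w; nra).
  assert (Hsw : q ^ 2 - w ^ 2 = 2 * w * s) by (unfold w; nra).
  exists (w / q). split; [split|split].
  - positivity.
  - apply (Rdiv_lt_1 w q); lra.
  - replace (q * (1 - w / q) ^ 2 / (2 * (w / q))) with ((q - w) ^ 2 / (2 * w)) by (field; lra).
    rewrite Hxw. field. lra.
  - replace (q * (1 - (w / q) ^ 2) / (2 * (w / q))) with ((q ^ 2 - w ^ 2) / (2 * w))
      by (field; lra).
    rewrite Hsw. field. lra.
Qed.

Section Parametrized.

Variables N K d r : R.
Hypotheses (HN : 4 <= N) (HK : 0 < K) (Hd0 : 0 < d) (Hd1 : d < 1)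
           (Hr0 : 0 < r) (Hr1 : r < 1).

Local Notation q := (2 * (N - 1) * K).
Local Notation xr := (q * (1 - r) ^ 2 / (2 * r)).
Local Notation sr := (q * (1 - r ^ 2) / (2 * r)).
Local Notation b := (b_of N K d xr sr).
Local Notation c := (bo_of N K d xr sr).
Local Notation c1 := (bo1_of N K d xr sr).
Local Notation c2 := (bo2_of N K d sr).

Lemma b_param : b = q * (1 + r ^ 2 + d * (N - 2) * r ^ 2) / (2 * r * (N - 1)).
Proof. unfold b_of, alpha_of. field. lra. Qed.

Lemma bo_param :
  c = q * ((1 - r) ^ 2 + 2 * r * N + d * (N - 2) * N * r ^ 2) / (2 * r * (N - 1) * N).
Proof. unfold bo_of. rewrite b_param. field. lra. Qed.

Lemma bo1_param :
  c1 = ((1 - r ^ 2) - d * N * (N - 2) * r ^ 2) / ((N - 1) * N * (1 - r ^ 2)).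
Proof. unfold bo1_of. field. repeat split; try lra; nra. Qed.

Lemma bo2_param : c2 = 4 * d * (N - 2) * r ^ 3 / ((N - 1) * q * (1 - r ^ 2) ^ 3).
Proof. unfold bo2_of. field. repeat split; try lra; nra. Qed.

Lemma bo_pos : 0 < c.
Proof.
  rewrite bo_param.
  assert (0 < d * (N - 2) * N * r ^ 2) by positivity.
  assert (0 < 2 * r * N) by positivity. positivity.
Qed.

(* The polynomial behind (i): with P = N(N-1) >= 12 and t = d N (N-2) r^2,
   which satisfies 0 <= t <= P r^2. *)
Lemma ineq_i_numerator :
  4 * (1 - r ^ 2 - d * N * (N - 2) * r ^ 2) ^ 2
  < ((1 - r) ^ 2 + 2 * r * N + d * N * (N - 2) * r ^ 2) * ((N - 1) * N) * (1 + r) ^ 2.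
Proof.
  set (P := (N - 1) * N). set (t := d * N * (N - 2) * r ^ 2). set (a := 1 - r ^ 2).
  assert (HP : 12 <= P) by (unfold P; nra).
  assert (Ht0 : 0 <= t) by (unfold t; assert (0 < d * N * (N - 2) * r ^ 2) by positivity; lra).
  assert (HtP : t <= P * r ^ 2).
  { unfold t, P. assert (0 < N * r ^ 2) by positivity. assert (d * (N - 2) <= N - 1) by nra. nra. }
  assert (Ha : 0 < a) by (unfold a; nra).
  assert (Hsq : (1 - r) ^ 2 * (1 + r) ^ 2 = a ^ 2) by (unfold a; ring).
  assert (Ht4 : 4 * t <= P * (1 + r) ^ 2).
  { assert (4 * r ^ 2 <= (1 + r) ^ 2) by nra.
    assert (P * (4 * r ^ 2) <= P * (1 + r) ^ 2) by (apply Rmult_le_compat_l; lra). lra. }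
  assert (4 * t * t <= P * (1 + r) ^ 2 * t) by (apply Rmult_le_compat_r; lra).
  assert (0 <= a * t) by nra.
  assert (4 * a ^ 2 < P * a ^ 2) by nra.
  assert (0 < P * (2 * r * N) * (1 + r) ^ 2) by (unfold P; positivity).
  replace (((1 - r) ^ 2 + 2 * r * N + t) * P * (1 + r) ^ 2)
    with (P * ((1 - r) ^ 2 * (1 + r) ^ 2) + P * (2 * r * N) * (1 + r) ^ 2 + P * (1 + r) ^ 2 * t)
    by ring.
  rewrite Hsq. lra.
Qed.

Lemma ineq_i : 4 * xr * c1 ^ 2 / c < 1.
Proof.
  pose proof bo_pos. apply (Rdiv_lt_1 _ c); auto.
  assert (E : c - 4 * xr * c1 ^ 2 = q / (2 * r * (N - 1) ^ 2 * N ^ 2 * (1 + r) ^ 2)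
     * (((1 - r) ^ 2 + 2 * r * N + d * N * (N - 2) * r ^ 2) * ((N - 1) * N) * (1 + r) ^ 2
        - 4 * (1 - r ^ 2 - d * N * (N - 2) * r ^ 2) ^ 2)).
  { rewrite bo_param, bo1_param. field. repeat split; try lra; nra. }
  pose proof ineq_i_numerator.
  assert (0 < q / (2 * r * (N - 1) ^ 2 * N ^ 2 * (1 + r) ^ 2)) by positivity.
  nra.
Qed.

(* (ii): 2 x \mathring b'' + \mathring b' = 1/(N(N-1)) + 2 e g(r) with
   e = d(N-2)/(2(N-1)) and g(r) = r^2(3+r)/(1+r)^3 < 1/2. *)
Lemma ineq_ii : d <= 2 * (2 * N - 5) / (N ^ 2 - 4) ->
  2 * xr * c2 + c1 < 2 * (N - 1) / (N * (N + 2)).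
Proof.
  intros Hdd.
  assert (E : 2 * xr * c2 + c1
      = 1 / ((N - 1) * N) + 2 * (d * (N - 2) / (2 * (N - 1))) * (r ^ 2 * (3 + r) / (1 + r) ^ 3)).
  { rewrite bo2_param, bo1_param. field. repeat split; try lra; nra. }
  rewrite E.
  assert (He : d * (N - 2) / (2 * (N - 1)) <= (2 * N - 5) / ((N + 2) * (N - 1))).
  { assert (Hd' : d * (N ^ 2 - 4) <= 2 * (2 * N - 5)).
    { apply Rle_div_r in Hdd; [lra | nra]. }
    replace (d * (N - 2) / (2 * (N - 1))) with (d * (N ^ 2 - 4) / (2 * (N + 2) * (N - 1)))
      by (field; lra).
    replace ((2 * N - 5) / ((N + 2) * (N - 1))) with (2 * (2 * N - 5) / (2 * (N + 2) * (N - 1)))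
      by (field; lra).
    apply Rmult_le_compat_r; [| exact Hd']. left. positivity. }
  assert (Hg : r ^ 2 * (3 + r) / (1 + r) ^ 3 < 1 / 2).
  { apply Rlt_div_l; [positivity |].
    assert (0 < r ^ 3) by positivity. assert (r ^ 3 < 1) by (apply pow_lt_1_compat; [lra | lia]).
    nra. }
  assert (0 < d * (N - 2) / (2 * (N - 1))) by positivity.
  assert (Hid : 1 / ((N - 1) * N) + (2 * N - 5) / ((N + 2) * (N - 1)) = 2 * (N - 1) / (N * (N + 2))).
  { field. repeat split; lra. }
  nra.
Qed.

Lemma mul_sqrt_lt (a u B : R) : 0 <= a -> 0 <= u -> 0 < B -> a ^ 2 * u < B ^ 2 -> a * sqrt u < B.
Proof.
  intros Ha Hu HB H. pose proof (sqrt_pos u). pose proof (pow2_sqrt u Hu).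
  assert (0 <= a * sqrt u) by positivity. nra.
Qed.

(* (iii): the gap x/N + NK - \mathring b is K(N-2)((1-r)^2/(rN) + 1 - dr), and
   its square exceeds the square of the root term by K^2(N-2)^2((1-dr)^2 - d(1-r)^2). *)
Lemma ineq_iii : (N - 2) / sqrt (N * (N - 1)) * sqrt (xr * c) + c < xr / N + N * K.
Proof.
  pose proof bo_pos.
  assert (Hgap : xr / N + N * K - c = K * (N - 2) * ((1 - r) ^ 2 / (r * N) + 1 - d * r)).
  { rewrite bo_param. field. repeat split; lra. }
  assert (0 <= (1 - r) ^ 2 / (r * N)) by (apply Rle_mult_inv_pos; [apply pow2_ge_0 | positivity]).
  assert (0 < sqrt (N * (N - 1))) by (apply sqrt_lt_R0; nra).
  assert (Ha2 : ((N - 2) / sqrt (N * (N - 1))) ^ 2 = (N - 2) ^ 2 / (N * (N - 1))).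
  { replace (((N - 2) / sqrt (N * (N - 1))) ^ 2) with ((N - 2) ^ 2 / sqrt (N * (N - 1)) ^ 2)
      by (field; lra).
    rewrite pow2_sqrt; nra. }
  enough ((N - 2) / sqrt (N * (N - 1)) * sqrt (xr * c) < xr / N + N * K - c) by lra.
  apply mul_sqrt_lt.
  - apply Rle_mult_inv_pos; lra.
  - left. positivity.
  - rewrite Hgap. positivity.
  - assert (Hdiff : (K * (N - 2) * ((1 - r) ^ 2 / (r * N) + 1 - d * r)) ^ 2
                    - (N - 2) ^ 2 / (N * (N - 1)) * (xr * c)
                    = K ^ 2 * (N - 2) ^ 2 * ((1 - d * r) ^ 2 - d * (1 - r) ^ 2)).
    { rewrite bo_param. field. repeat split; lra. }
    assert (0 < (1 - d * r) ^ 2 - d * (1 - r) ^ 2).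
    { assert (0 < 1 - r < 1 - d * r) by nra. assert (0 < (1 - r) ^ 2) by positivity. nra. }
    assert (0 < K ^ 2 * (N - 2) ^ 2 * ((1 - d * r) ^ 2 - d * (1 - r) ^ 2)) by positivity.
    rewrite Ha2, Hgap. lra.
Qed.

(* (iv): the difference of the two sides is -2K^2 r^2 d(1-d)(N-2)^2/(1+r). *)
Lemma ineq_iv : c * (b - N * K) - xr * c1 * (b + N * K) < - 2 * (1 - d) * (N - 2) * K ^ 2.
Proof.
  assert (E : c * (b - N * K) - xr * c1 * (b + N * K) - (- 2 * (1 - d) * (N - 2) * K ^ 2)
             = - (2 * K ^ 2 * r ^ 2 * d * (1 - d) * (N - 2) ^ 2 / (1 + r))).
  { rewrite bo_param, b_param, bo1_param. field. repeat split; try lra; nra. }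
  assert (0 < 2 * K ^ 2 * r ^ 2 * d * (1 - d) * (N - 2) ^ 2 / (1 + r)) by positivity.
  lra.
Qed.

(* (v): the difference of the two sides is
   -2K^2 d(N-2)(1 + (3N-2)r + (N+1)r^2)/(1+r). *)
Lemma ineq_v :
  xr / (N - 1) * (b + N * K) - (xr / (N - 1) + 2 * N * K) * (c + b - N * K - xr * c1)
  < - (2 * K * xr / (N - 1)) + 2 * N * (N - 4) * K ^ 2.
Proof.
  assert (E : xr / (N - 1) * (b + N * K)
                - (xr / (N - 1) + 2 * N * K) * (c + b - N * K - xr * c1)
                - (- (2 * K * xr / (N - 1)) + 2 * N * (N - 4) * K ^ 2)
             = - (2 * K ^ 2 * d * (N - 2) * (1 + (3 * N - 2) * r + (N + 1) * r ^ 2) / (1 + r))).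
  { rewrite bo_param, b_param, bo1_param. field. repeat split; try lra; nra. }
  assert (0 < (3 * N - 2) * r) by positivity.
  assert (0 < 2 * K ^ 2 * d * (N - 2) * (1 + (3 * N - 2) * r + (N + 1) * r ^ 2) / (1 + r))
    by positivity.
  lra.
Qed.

(* (vi): the difference of the two sides is a sum of two non-positive terms,
   the first vanishing only for N = 4, the second strictly negative. *)
Lemma ineq_vi : 2 * c - xr / N + xr * c1 < 2 * (d * (N - 2) + 2) * K.
Proof.
  assert (E : 2 * c - xr / N + xr * c1 - 2 * (d * (N - 2) + 2) * K
      = - q * ((N - 4) * (1 - r) ^ 2 / (2 * r * (N - 1) * N)
               + d * (N - 2) / (2 * (N - 1)) * (1 - r) * (2 + 3 * r) / (1 + r))).
  { rewrite bo_param, bo1_param. field. repeat split; try lra; nra. }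
  assert (0 <= (N - 4) * (1 - r) ^ 2 / (2 * r * (N - 1) * N)).
  { apply Rle_mult_inv_pos; [apply Rmult_le_pos; [lra | apply pow2_ge_0] | positivity]. }
  assert (0 < d * (N - 2) / (2 * (N - 1)) * (1 - r) * (2 + 3 * r) / (1 + r)) by positivity.
  assert (0 < q) by positivity.
  nra.
Qed.

End Parametrized.

Lemma delta_bounds (n : nat) : (4 <= n)%nat -> 0 < delta n < 1.
Proof.
  intros Hn. pose proof (INR_ge4 n Hn) as HN. unfold delta.
  destruct (Nat.leb_spec n 12).
  - pose proof (sqrt_sqrt (12 * INR n + 9) ltac:(lra)). pose proof (sqrt_pos (12 * INR n + 9)).
    set (t := sqrt (12 * INR n + 9)) in *.
    assert (7 < t) by nra. assert (t < 2 * INR n + 3) by nra.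
    split; [apply Rdiv_lt_0_compat | apply (Rdiv_lt_1 _ (2 * (INR n - 2)))]; lra.
  - split; [apply Rdiv_lt_0_compat | apply (Rdiv_lt_1 _ (INR n ^ 2 - 2))]; nra.
Qed.

Theorem lemma5p2 (n : nat) (K x : R) :
  (4 <= n)%nat -> 0 < K -> 0 < x ->
  let N := INR n in
  let b := bfun n K x in
  let c := bo n K x in
  let c1 := bo' n K x in
  let c2 := bo'' n K x in
  let d := delta n in
  (* (i) *)
  4 * x * c1 ^ 2 / c < 1 /\
  (* (ii) *)
  (d <= 2 * (2 * N - 5) / (N ^ 2 - 4) ->
     2 * x * c2 + c1 < 2 * (N - 1) / (N * (N + 2))) /\
  (* (iii) *)
  (N - 2) / sqrt (N * (N - 1)) * sqrt (x * c) + c < x / N + N * K /\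
  (* (iv) *)
  c * (b - N * K) - x * c1 * (b + N * K) < - 2 * (1 - d) * (N - 2) * K ^ 2 /\
  (* (v) *)
  x / (N - 1) * (b + N * K)
    - (x / (N - 1) + 2 * N * K) * (c + b - N * K - x * c1)
    < - (2 * K * x / (N - 1)) + 2 * N * (N - 4) * K ^ 2 /\
  (* (vi) *)
  2 * c - x / N + x * c1 < 2 * (d * (N - 2) + 2) * K.
Proof.
  intros Hn HK Hx. cbv zeta.
  rewrite bfun_eq, bo_eq, bo'_eq, bo''_eq by assumption.
  pose proof (INR_ge4 n Hn) as HN. destruct (delta_bounds n Hn) as [Hd0 Hd1].
  set (N := INR n) in *. set (d := delta n) in *.
  destruct (rational_parametrization (2 * (N - 1) * K) x ltac:(positivity) Hx)
    as (r & [Hr0 Hr1] & Hxr & Hsr).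
  replace (x ^ 2 + 4 * (N - 1) * K * x) with (x ^ 2 + 2 * (2 * (N - 1) * K) * x) by ring.
  rewrite Hsr. subst x.
  repeat split;
    [apply ineq_i | apply ineq_ii | apply ineq_iii | apply ineq_iv | apply ineq_v | apply ineq_vi];
    assumption.
Qed.
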